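(* Under the standing assumptions below, if $\delta:\mathbb{S}^m\to\mathbb{R}^n$ is continuous with $\Gamma_0[\delta]=0$, then $\delta(\phi)\in\operatorname{span}\{\partial_t\gamma(\phi,0),\partial_{\phi_1}\gamma(\phi,0),\dots,\partial_{\phi_m}\gamma(\phi,0)\}$ for every $\phi\in\mathbb{S}^m$, i.e. the right nullspace of $\Gamma_0$ consists of functions tangent to the torus $(\phi,t)\mapsto\gamma(\phi,t)$ at $t=0$.
   Context: Let $\mathbb{S}=\mathbb{R}/\mathbb{Z}$, $m\ge 1$, $n\ge1$, $f:\mathbb{R}^n\to\mathbb{R}^n$ smooth, $T>0$. Let $u:\mathbb{S}^{m+1}\to\mathbb{R}^n$ be smooth and $\rho\in\mathbb{R}^m$ be such that $1,\rho_1,\dots,\rho_m$ are rationally independent, and let $\gamma(\phi,t):=u(\phi+\rho t,t)$ solve $\partial_t\gamma=Tf(\gamma)$ for every $\phi\in\mathbb{S}^m$. Let $X(\phi,t)$ solve $\partial_tX=T\,\mathrm{D}f(\gamma(\phi,t))X$, $X(\phi,0)=I_n$. Define $\Gamma_0[\delta](\phi):=X(\phi-\rho,1)\delta(\phi-\rho)-\delta(\phi)$ for continuous $\delta:\mathbb{S}^m\to\mathbb{R}^n$. Normal hyperbolicity assumption: there are continuous $w_t,w_{\phi_1},\dots,w_{\phi_m}:\mathbb{S}^m\to\mathbb{R}^n$ such that $$Q(\phi,t):=X(\phi,t)\Big(I_n-\partial_t\gamma(\phi,0)w_t^\mathsf{T}(\phi)-\sum_{i=1}^m\partial_{\phi_i}\gamma(\phi,0)w_{\phi_i}^\mathsf{T}(\phi)\Big)X^{-1}(\phi,t)$$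 is a smooth family of projections with $Q(\phi,t+1)=Q(\phi+\rho,t)$, and $\Gamma_0$ is a bijection with bounded inverse on the space of functions $\phi\mapsto Q(\phi,0)\delta(\phi)$. *)

From HB Require Import structures.
From mathcomp Require Import all_boot all_order all_algebra.
From mathcomp Require Import all_classical all_reals all_analysis.
Set Implicit Arguments. Unset Strict Implicit. Unset Printing Implicit Defensive.
Import Order.TTheory GRing.Theory Num.Theory.
Import numFieldNormedType.Exports.
Local Open Scope ring_scope.

Section Defs.
Context {R : realType}.

Definition iterD {a b : nat} {W : normedModType R} (vs : seq 'M[R]_(a, b))
  (g : 'M[R]_(a, b) -> W) : 'M[R]_(a, b) -> W :=
  foldr (fun v h => fun x => derive h x v) g vs.

(* C^infty on R^(a*b) (row or column vectors): all iterated directional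
   derivatives exist and are continuous *)
Definition smooth {a b : nat} {W : normedModType R} (g : 'M[R]_(a, b) -> W) : Prop :=
  forall vs : seq 'M[R]_(a, b),
    continuous (iterD vs g) /\ forall x v, derivable (iterD vs g) x v.

(* g is 1-periodic in every coordinate, i.e. g descends to the torus S^k = R^k/Z^k *)
Definition torus_periodic {k : nat} {W : Type} (g : 'rV[R]_k -> W) : Prop :=
  forall (x : 'rV[R]_k) (i : 'I_k), g (x + delta_mx 0 i) = g x.

Definition rat_indep1 {m : nat} (rho : 'rV[R]_m) : Prop :=
  forall (q0 : rat) (q : 'I_m -> rat),
    ratr q0 + \sum_(i < m) ratr (q i) * rho 0 i = 0 -> q0 = 0 /\ forall i, q i = 0.

Definition pt {m : nat} (phi : 'rV[R]_m) (t : R) : 'rV[R]_(m + 1) :=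
  row_mx phi (t%:M).

Definition gam {m n : nat} (u : 'rV[R]_(m + 1) -> 'cV[R]_n) (rho : 'rV[R]_m)
  (phi : 'rV[R]_m) (t : R) : 'cV[R]_n := u (pt (phi + t *: rho) t).

Definition jac {n : nat} (f : 'cV[R]_n -> 'cV[R]_n) (x : 'cV[R]_n) : 'M[R]_n :=
  \matrix_(i, j) (derive f x (delta_mx j 0 : 'cV[R]_n)) i 0.

Definition dt_gam {m n : nat} (g : 'rV[R]_m -> R -> 'cV[R]_n) (phi : 'rV[R]_m)
  : 'cV[R]_n := derive (g phi) 0 1.

Definition dphi_gam {m n : nat} (g : 'rV[R]_m -> R -> 'cV[R]_n) (phi : 'rV[R]_m)
  (i : 'I_m) : 'cV[R]_n := derive (fun psi => g psi 0) phi (delta_mx 0 i).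

Definition Qmat {m n : nat} (g : 'rV[R]_m -> R -> 'cV[R]_n)
  (X : 'rV[R]_m -> R -> 'M[R]_n) (wt : 'rV[R]_m -> 'cV[R]_n)
  (wphi : 'I_m -> 'rV[R]_m -> 'cV[R]_n) (phi : 'rV[R]_m) (t : R) : 'M[R]_n :=
  X phi t *m (1%:M - dt_gam g phi *m (wt phi)^T
                   - \sum_(i < m) dphi_gam g phi i *m (wphi i phi)^T)
      *m invmx (X phi t).

Definition Gamma0 {m n : nat} (X : 'rV[R]_m -> R -> 'M[R]_n) (rho : 'rV[R]_m)
  (delta : 'rV[R]_m -> 'cV[R]_n) : 'rV[R]_m -> 'cV[R]_n :=
  fun phi => X (phi - rho) 1 *m delta (phi - rho) - delta phi.

Definition C0torus {m n : nat} (delta : 'rV[R]_m -> 'cV[R]_n) : Prop :=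
  continuous delta /\ torus_periodic delta.

Definition Qspace {m n : nat} (Q : 'rV[R]_m -> R -> 'M[R]_n)
  (g : 'rV[R]_m -> 'cV[R]_n) : Prop :=
  exists delta, C0torus delta /\ g = (fun phi => Q phi 0 *m delta phi).

Definition bij_bounded_inv {m n : nat} (Q : 'rV[R]_m -> R -> 'M[R]_n)
  (G : ('rV[R]_m -> 'cV[R]_n) -> ('rV[R]_m -> 'cV[R]_n)) : Prop :=
  [/\ (forall g, Qspace Q g -> Qspace Q (G g)),
      (forall g1 g2, Qspace Q g1 -> Qspace Q g2 -> G g1 = G g2 -> g1 = g2),
      (forall h, Qspace Q h -> exists g, Qspace Q g /\ G g = h) &
      (exists C : R, forall g, Qspace Q g -> forall B : R,
          (forall phi, `|G g phi| <= B) -> forall phi, `|g phi| <= C * B)].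

End Defs.

From HB Require Import structures.
From mathcomp Require Import all_boot all_order all_algebra.
From mathcomp Require Import all_classical all_reals all_analysis.
From mathcomp Require Import lra ring.
Import Order.TTheory GRing.Theory Num.Theory.
Import numFieldNormedType.Exports.
Local Open Scope classical_set_scope.
Local Open Scope ring_scope.

(* Gamma_0 commutes with the projection field Q(.,0): since
   Q(phi,t) = X(phi,t) Q(phi,0) X(phi,t)^-1 and Q(phi-rho,1) = Q(phi,0),
   X(phi-rho,1) Q(phi-rho,0) = Q(phi,0) X(phi-rho,1).  So if Gamma_0[delta] = 0
   then Gamma_0[Q delta] = Q Gamma_0[delta] = 0, and injectivity of Gamma_0 on
   the range of Q gives Q(phi,0) delta(phi) = 0, i.e. delta = (I - Q(.,0)) delta,
   which lies in the tangent span by the very definition of Q.  The commutation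
   needs the monodromy X(phi,1) to be invertible: X solves a linear ODE with
   continuous coefficients, and a Gronwall estimate on |X(t) w|^2 e^(L t) shows
   that X(1) w = 0 forces w = X(0) w = 0. *)

Lemma is_derive_sumf {R : realType} k (F : 'I_k -> R -> R) (t : R)
    (dF : 'I_k -> R) :
  (forall i, is_derive t 1 (F i) (dF i)) ->
  is_derive t 1 (fun s => \sum_i F i s) (\sum_i dF i).
Proof.
move=> dF_F; have -> : (fun s => \sum_i F i s) = \sum_i F i.
  by apply/funext => s; rewrite fct_sumE.
exact: is_derive_sum.
Qed.

Lemma is_derive_mxE {R : realType} {p q} {g : R -> 'M[R]_(p, q)} {t : R}
    {dg : 'M[R]_(p, q)} i j :
  is_derive t 1 g dg -> is_derive t 1 (fun s => g s i j) (dg i j).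
Proof.
move=> [dg_ex <-].
pose quot (h : R) := h^-1 *: ((g \o shift t) (h *: 1) - g t).
have quot_cvg : quot @ 0^' --> 'D_1 g t by exact: dg_ex.
have quot_ij : (fun h : R => h^-1 *: (((fun s => g s i j) \o shift t) (h *: 1)
    - g t i j)) @ 0^' --> 'D_1 g t i j.
  rewrite (_ : (fun h : R => _) = (fun M => M i j) \o quot).
    exact: continuous_cvg (@coord_continuous R p q i j _) quot_cvg.
  by apply/funext => h; rewrite /= !mxE.
split; first exact: (cvgP _ quot_ij).
exact: cvg_lim quot_ij.
Qed.

Lemma mx_bounded_itv {R : realType} {p q} {F : R -> 'M[R]_(p, q)} {a b : R} :
  (forall i j, continuous (fun t => F t i j)) -> a <= b ->
  exists K : R, forall t, t \in `[a, b] -> forall i j, `|F t i j| <= K.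
Proof.
move=> cF ab.
have entry_bound (ij : 'I_p * 'I_q) :
    exists K, forall t, t \in `[a, b] -> `|F t ij.1 ij.2| <= K.
  have [|c _ maxc] := @EVT_max R (fun t => `|F t ij.1 ij.2|) a b ab.
    apply: continuous_subspaceT => t.
    exact: continuous_comp (cF _ _ t) (@norm_continuous _ _ _).
  by exists `|F c ij.1 ij.2|.
have [Kij hKij] := choice entry_bound.
exists (\sum_ij `|Kij ij|) => t tab i j.
apply: le_trans (hKij (i, j) t tab) _; apply: le_trans (ler_norm _) _.
by rewrite (bigD1 (i, j)) //= lerDl sumr_ge0.
Qed.

Lemma quadratic_form_ge {R : realFieldType} k (a : 'I_k -> 'I_k -> R)
    (x : 'I_k -> R) (K : R) :
  (forall i l, `|a i l| <= K) ->
  - (K * k%:R * \sum_i x i ^+ 2) <= \sum_i x i * \sum_l a i l * x l.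
Proof.
move=> aK.
have pair i l : - (x i * (a i l * x l)) <= K / 2 * (x i ^+ 2 + x l ^+ 2).
  have K0 : 0 <= K := le_trans (normr_ge0 _) (aK i l).
  have le_norms : - (x i * (a i l * x l)) <= K * (`|x i| * `|x l|).
    apply: le_trans (ler_norm _) _; rewrite normrN !normrM mulrCA.
    by rewrite ler_wpM2r ?mulr_ge0.
  have amgm : 2 * (`|x i| * `|x l|) <= x i ^+ 2 + x l ^+ 2.
    rewrite -[x i ^+ 2]real_normK ?num_real // -[x l ^+ 2]real_normK ?num_real //.
    rewrite -subr_ge0.
    by rewrite (_ : _ - _ = (`|x i| - `|x l|) ^+ 2) ?sqr_ge0 //; ring.
  nra.
rewrite -lerN2 opprK -sumrN.
apply: le_trans (_ : _ <= \sum_i \sum_l K / 2 * (x i ^+ 2 + x l ^+ 2)) _.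
  apply: ler_sum => i _; rewrite big_distrr -sumrN; apply: ler_sum => l _.
  exact: pair.
under eq_bigr do rewrite -big_distrr big_split sumr_const card_ord /=.
rewrite -big_distrr big_split sumr_const card_ord /= sumrMnl -mulr_natr.
by rewrite le_eqVlt; apply/orP; left; apply/eqP; field.
Qed.

Lemma is_derive_expRM {R : realType} (L x : R) :
  is_derive x 1 (fun t => expR (L * t)) (expR (L * x) * L).
Proof.
have dL : is_derive x 1 ( *%R L) L.
  apply: is_derive_eq (is_deriveZ L (is_derive_id x 1)) _.
  by rewrite /GRing.scale /= mulr1.
exact: (is_derive1_comp (is_derive_expR _) dL).
Qed.

Lemma gronwall_backward {R : realType} (E dE : R -> R) (L t1 : R) :
  0 <= t1 -> (forall t : R, is_derive t 1 E (dE t)) ->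
  (forall t, t \in `]0, t1[ -> - (L * E t) <= dE t) ->
  E 0 <= E t1 * expR (L * t1).
Proof.
move=> t1_ge0 dE_E dE_ge.
pose h t := E t * expR (L * t).
have dh (t : R) : is_derive t 1 h (E t * (expR (L * t) * L) + expR (L * t) * dE t).
  rewrite (_ : h = E * (fun t => expR (L * t))) //.
  exact: is_deriveM (dE_E t) (is_derive_expRM L t).
have -> : E 0 = h 0 by rewrite /h mulr0 expR0 mulr1.
apply: (@ger0_derive1_ndecr R h 0 t1 _ _ _ 0 t1) => //.
- move=> t /dE_ge dEt; rewrite derive1E derive_val.
  rewrite mulrCA -mulrDr mulr_ge0 ?expR_ge0 //; lra.
- exact: derivable_within_continuous.
Qed.

Lemma sum_sqr_col_eq0 {R : realDomainType} n (v : 'cV[R]_n) :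
  \sum_i v i 0 ^+ 2 = 0 -> v = 0.
Proof.
move=> sum0; apply/matrixP => i j; rewrite ord1 mxE.
apply/eqP; rewrite -sqrf_eq0; apply/eqP.
by apply: (psumr_eq0P _ sum0) => // k _; rewrite sqr_ge0.
Qed.

Section LinearODE.
Variables (R : realType) (n : nat) (A Y : R -> 'M[R]_n).
Hypothesis dY : forall t : R, is_derive t 1 Y (A t *m Y t).
Hypothesis cA : forall i j, continuous (fun t => A t i j).

Lemma is_derive_linear_ode_mulmx (w : 'cV[R]_n) i (t : R) :
  is_derive t 1 (fun s => (Y s *m w) i 0) ((A t *m (Y t *m w)) i 0).
Proof.
have -> : (fun s => (Y s *m w) i 0) = fun s => \sum_k Y s i k * w k 0.
  by apply/funext => s; rewrite mxE.
rewrite mulmxA mxE; apply: is_derive_sumf => k.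
have := is_deriveM (is_derive_mxE i k (dY t)) (is_derive_cst (w k 0) t 1).
by move/is_derive_eq; apply; rewrite scaler0 add0r mulrC.
Qed.

Lemma linear_ode_kernel_backward {w : 'cV[R]_n} {t1 : R} :
  0 <= t1 -> Y t1 *m w = 0 -> Y 0 *m w = 0.
Proof.
move=> t1_ge0 Yw0.
pose x t := Y t *m w.
pose E t := \sum_i x t i 0 ^+ 2.
have dE (t : R) : is_derive t 1 E (\sum_i 2 * x t i 0 * (A t *m x t) i 0).
  apply: is_derive_sumf => i.
  by move: (is_deriveX 2 (is_derive_linear_ode_mulmx w i t)) => /is_derive_eq; apply.
have [K AK] := mx_bounded_itv cA t1_ge0.
have E0 : E 0 <= E t1 * expR (K * n%:R * 2 * t1).
  apply: gronwall_backward dE _ => // t t_in.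
  have t_in' : t \in `[0, t1] by apply: subset_itv_oo_cc.
  have := @quadratic_form_ge _ n (A t) (fun i => x t i 0) K (AK t t_in').
  rewrite (_ : \sum_i 2 * x t i 0 * _ = 2 * \sum_i x t i 0 * \sum_l A t i l * x t l 0).
    by rewrite /E; lra.
  by rewrite big_distrr; apply: eq_bigr => i _; rewrite [(A t *m _) i 0]mxE -mulrA.
apply: (@sum_sqr_col_eq0 R); apply/eqP; rewrite eq_le sumr_ge0 ?andbT => [|i _].
  by apply: le_trans E0 _; rewrite /E /x Yw0 big1 ?mul0r // => i _; rewrite mxE expr0n.
exact: sqr_ge0.
Qed.

Lemma linear_ode_unitmx : Y 0 = 1%:M -> forall t, 0 <= t -> Y t \in unitmx.
Proof.
move=> Y0 t t_ge0; rewrite unitmxE unitfE -det_tr; apply/negP => /det0P[v v_neq0 vY0].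
have : Y t *m v^T = 0 by rewrite -[Y t]trmxK -trmx_mul vY0 trmx0.
move=> /(linear_ode_kernel_backward t_ge0); rewrite Y0 mul1mx => vT0.
by move: v_neq0; rewrite -[v]trmxK vT0 trmx0 eqxx.
Qed.

End LinearODE.

Lemma continuous_jac {R : realType} n (f : 'cV[R]_n -> 'cV[R]_n) i j :
  smooth f -> continuous (fun x => jac f x i j).
Proof.
move=> sf x; have [cDf _] := sf [:: (delta_mx j 0 : 'cV[R]_n)].
have -> : (fun x => jac f x i j)
    = (fun v : 'cV[R]_n => v i 0) \o (fun x => derive f x (delta_mx j 0)).
  by apply/funext => y; rewrite /= mxE.
exact: continuous_comp (cDf x) (@coord_continuous R n 1 i 0 _).
Qed.

Lemma variational_unitmx {R : realType} {n} {f : 'cV[R]_n -> 'cV[R]_n} {T : R}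
    {g : R -> 'cV[R]_n} {Y : R -> 'M[R]_n} :
  smooth f -> continuous g ->
  (forall t : R, is_derive t 1 Y (T *: (jac f (g t) *m Y t))) ->
  Y 0 = 1%:M -> forall t, 0 <= t -> Y t \in unitmx.
Proof.
move=> sf cg dY.
apply: (@linear_ode_unitmx R n (fun t => T *: jac f (g t)) Y) => [t|i j].
  by rewrite -scalemxAl.
have -> : (fun t => (T *: jac f (g t)) i j)
    = ( *:%R T) \o (fun x => jac f x i j) \o g.
  by apply/funext => t; rewrite /= mxE.
move=> t; apply: continuous_comp (cg t) _.
apply: continuous_comp; [exact: continuous_jac | exact: scaler_continuous].
Qed.

Section TangentProjection.
Context {R : realType} {m n : nat} {g : 'rV[R]_m -> R -> 'cV[R]_n}.
Context {X : 'rV[R]_m -> R -> 'M[R]_n} {wt : 'rV[R]_m -> 'cV[R]_n}.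
Context {wphi : 'I_m -> 'rV[R]_m -> 'cV[R]_n}.
Hypothesis X0 : forall phi, X phi 0 = 1%:M.
Local Notation Q := (Qmat g X wt wphi).

Lemma Qmat0 phi : Q phi 0 = 1%:M - dt_gam g phi *m (wt phi)^T
  - \sum_i dphi_gam g phi i *m (wphi i phi)^T.
Proof. by rewrite /Qmat X0 invmx1 mul1mx mulmx1. Qed.

Lemma Qmat0_complement phi (d : 'cV[R]_n) :
  (1%:M - Q phi 0) *m d = ((wt phi)^T *m d) 0 0 *: dt_gam g phi
    + \sum_i ((wphi i phi)^T *m d) 0 0 *: dphi_gam g phi i.
Proof.
have mulmx_col11 (c : 'cV[R]_n) (s : 'M[R]_1) : c *m s = s 0 0 *: c.
  by rewrite {1}[s]mx11_scalar mul_mx_scalar.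
rewrite Qmat0 !opprB addrCA [1%:M + _]addrC subrK addrC mulmxDl mulmx_suml.
rewrite -mulmxA mulmx_col11; congr (_ + _).
by apply: eq_bigr => i _; rewrite -mulmxA mulmx_col11.
Qed.

Context {rho : 'rV[R]_m}.
Hypothesis X1_unit : forall phi, X phi 1 \in unitmx.
Hypothesis Q_shift : forall phi t, Q phi (t + 1) = Q (phi + rho) t.

Lemma Gamma0_Qmat (d : 'rV[R]_m -> 'cV[R]_n) :
  Gamma0 X rho (fun phi => Q phi 0 *m d phi) = fun phi => Q phi 0 *m Gamma0 X rho d phi.
Proof.
apply/funext => phi; rewrite /Gamma0 mulmxBr; congr (_ - _).
have -> : Q phi 0 = Q (phi - rho) 1 by rewrite -[1]add0r Q_shift subrK.
rewrite /Qmat X0 invmx1 mul1mx mulmx1 -!mulmxA; congr (_ *m _).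
by rewrite [invmx _ *m (_ *m d _)]mulmxA mulVmx ?mul1mx.
Qed.

End TangentProjection.

Theorem mainTheorem13 (R : realType) (m n : nat) (hm : (1 <= m)%N) (hn : (1 <= n)%N)
  (f : 'cV[R]_n -> 'cV[R]_n) (T : R)
  (u : 'rV[R]_(m + 1) -> 'cV[R]_n) (rho : 'rV[R]_m)
  (X : 'rV[R]_m -> R -> 'M[R]_n)
  (wt : 'rV[R]_m -> 'cV[R]_n) (wphi : 'I_m -> 'rV[R]_m -> 'cV[R]_n)
  (delta : 'rV[R]_m -> 'cV[R]_n) :
  smooth f -> 0 < T ->
  smooth u -> torus_periodic u ->
  rat_indep1 rho ->
  (forall phi t, is_derive t (1 : R) (gam u rho phi) (T *: f (gam u rho phi t))) ->
  (forall phi t, is_derive t (1 : R) (X phi)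
                   (T *: (jac f (gam u rho phi t) *m X phi t))) ->
  (forall phi, X phi 0 = 1%:M) ->
  C0torus wt -> (forall i, C0torus (wphi i)) ->
  let Q := Qmat (gam u rho) X wt wphi in
  smooth (fun p : 'rV[R]_(m + 1) => Q (lsubmx p) (rsubmx p 0 0)) ->
  (forall phi t, Q phi t *m Q phi t = Q phi t) ->
  (forall phi t, Q phi (t + 1) = Q (phi + rho) t) ->
  bij_bounded_inv Q (Gamma0 X rho) ->
  C0torus delta ->
  (forall phi, Gamma0 X rho delta phi = 0) ->
  forall phi, exists (c0 : R) (c : 'I_m -> R),
    delta phi = c0 *: dt_gam (gam u rho) phi
                + \sum_(i < m) c i *: dphi_gam (gam u rho) phi i.
Proof.
move=> sf _ _ _ _ dgam dX X0 _ _ Q _ _ Q_shift [_ Gamma0_inj _ _] cdelta Gdelta0 phi.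
have X1_unit psi : X psi 1 \in unitmx.
  apply: (variational_unitmx sf _ (dX psi) (X0 psi) 1 ler01) => t.
  exact/differentiable_continuous/derivable1_diffP.
have Qdelta0 : (fun psi => Q psi 0 *m delta psi) = fun=> 0.
  apply: Gamma0_inj; first by exists delta.
    exists (fun=> 0); split; last by apply/funext => psi; rewrite mulmx0.
    by split => //; exact: cst_continuous.
  rewrite Gamma0_Qmat //; apply/funext => psi.
  by rewrite Gdelta0 /Gamma0 !mulmx0 subrr.
exists (((wt phi)^T *m delta phi) 0 0), (fun i => ((wphi i phi)^T *m delta phi) 0 0).
rewrite -(Qmat0_complement X0) mulmxBl mul1mx.
by move/(congr1 (fun F => F phi)): Qdelta0 => /= ->; rewrite subr0.
Qed.
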